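(* Impose (A1)–(A6) and (A8), fix $x\in\mathcal X$ and $u\in[0,1]$, and write $\theta(x,u)=\mathbb E[Y_1^*\mid X=x,U=u,S_0=1,S_1=1]$. Then: (i) under (A7.1), $\underline y^*\le \theta(x,u)\le \dfrac{m_1^Y(x,u)-\underline y^*\,\Delta_S(x,u)}{m_0^S(x,u)}$; (ii) under (A7.2), $\dfrac{m_1^Y(x,u)-\overline y^*\,\Delta_S(x,u)}{m_0^S(x,u)}\le\theta(x,u)\le \overline y^*$; (iii) under (A7.3) (sub-case (a) or (b)), $\dfrac{m_1^Y(x,u)-\overline y^*\,\Delta_S(x,u)}{m_0^S(x,u)}\le\theta(x,u)\le\dfrac{m_1^Y(x,u)-\underline y^*\,\Delta_S(x,u)}{m_0^S(x,u)}$.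
   Context: Standing setup. On a common probability space: $X$ (covariates, support $\mathcal X$), $Z$ (instrument, support $\mathcal Z$), $W=(X,Z)$; latent real random variables $U,V$, jointly continuously distributed conditional on $X$, with $U\mid X$ and $V\mid X$ each Uniform$[0,1]$ (their joint dependence unrestricted); real potential outcomes of interest $Y_0^*,Y_1^*$. Given functions $P:\mathcal X\times\mathcal Z\to[0,1]$ and $Q:\{0,1\}\times\mathcal X\to[0,1]$, define the treatment $D=\mathbf 1\{P(W)\ge U\}$, potential selection indicators $S_d=\mathbf 1\{Q(d,X)\ge V\}$ ($d\in\{0,1\}$), selection indicator $S=DS_1+(1-D)S_0$, potential observable outcomes $Y_d=S_dY_d^*$ and observable outcome $Y=DY_1+(1-D)Y_0$. For $x\in\mathcal X$, $u\in[0,1]$, $d\in\{0,1\}$: $m_d^Y(x,u)=\mathbb E[Y_d\mid X=x,U=u]$, $m_d^S(x,u)=\mathbb E[S_d\mid X=x,U=u]$, $\Delta_S(x,u)=m_1^S(x,u)-m_0^S(x,u)$, and $\Delta^{OO}_{Y^*}(x,u)=\mathbb E[Y_1^*-Y_0^*\mid X=x,U=u,S_0=1,S_1=1]$. Ratios appearing are assumed well defined (nonzero denominators). Assumptions: (A1) $Z$ is independent of $(U,V,Y_0^*,Y_1^* )$ conditional on $X$; (A2) the distribution of $P(W)$ given $X$ is nondegenerate; (A3) $\mathbb E|Y_d^*|<\infty$ and $\mathbb E[(Y_d^* )^2]<\infty$ for $d=0,1$; (A4) $0<\mathbb P[D=1\mid X]<1$; (A5) $X$ is invariant to counterfactual manipulation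 of treatment; (A6) $Y_0^*$ and $Y_1^*$ have a common support $\mathcal Y^*\subseteq\mathbb R$; write $\underline y^*=\inf\mathcal Y^*\in\mathbb R\cup\{-\infty\}$ and $\overline y^*=\sup\mathcal Y^*\in\mathbb R\cup\{+\infty\}$, assumed known. Support cases: (A7.1) $\underline y^*>-\infty$, $\overline y^*=+\infty$, $\mathcal Y^*$ an interval; (A7.2) $\underline y^*=-\infty$, $\overline y^*<\infty$, $\mathcal Y^*$ an interval; (A7.3) $\underline y^*,\overline y^*$ both finite and either (a) $\mathcal Y^*$ is an interval or (b) $\underline y^*\in\mathcal Y^*$ and $\overline y^*\in\mathcal Y^*$. (A8) $Q(1,x)>Q(0,x)>0$ for all $x\in\mathcal X$. *)

From HB Require Import structures.
From mathcomp Require Import all_boot all_order all_algebra.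
From mathcomp Require Import all_classical all_reals all_analysis.
Set Implicit Arguments. Unset Strict Implicit. Unset Printing Implicit Defensive.
Import Order.TTheory GRing.Theory Num.Theory.
Import numFieldNormedType.Exports.
Local Open Scope classical_set_scope.
Local Open Scope ring_scope.

Section Model.
Context {R : realType} {d dx dz : measure_display}
  (Omega : measurableType d) (Xt : measurableType dx) (Zt : measurableType dz).

Definition indR (b : bool) : R := (b : nat)%:R.

Definition treat (Pf : Xt -> Zt -> R) (X : Omega -> Xt) (Z : Omega -> Zt)
  (U : Omega -> R) (w : Omega) : bool := U w <= Pf (X w) (Z w).

(* Potential selection S_d = 1{Q(d,X) >= V}; d = true is treatment 1. *)
Definition sel (Q : bool -> Xt -> R) (X : Omega -> Xt) (V : Omega -> R)
  (dd : bool) (w : Omega) : bool := V w <= Q dd (X w).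

Definition cond_prob_version (P : probability Omega R) (X : Omega -> Xt)
  (A : set Omega) (f : Xt -> R) : Prop :=
  measurable_fun setT f /\
  forall C : set Xt, measurable C ->
    P (A `&` (X @^-1` C)) = (\int[P]_(w in X @^-1` C) (f (X w))%:E)%E.

Definition cond_indep {dw} {Wt : measurableType dw} (P : probability Omega R)
  (X : Omega -> Xt) (Z : Omega -> Zt) (Wv : Omega -> Wt) : Prop :=
  forall (A : set Zt) (B : set Wt), measurable A -> measurable B ->
    exists f g : Xt -> R,
      [/\ cond_prob_version P X (Z @^-1` A) f,
          cond_prob_version P X (Wv @^-1` B) g &
          cond_prob_version P X ((Z @^-1` A) `&` (Wv @^-1` B)) (f \* g)].

Definition uniform_given (P : probability Omega R) (X : Omega -> Xt)
  (U : Omega -> R) : Prop :=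
  forall (t : R) (C : set Xt), 0 <= t <= 1 -> measurable C ->
    P ([set w | U w <= t] `&` (X @^-1` C)) = (t%:E * P (X @^-1` C))%E.

(* (U,V) jointly continuously distributed (conditional on X): the joint law
   of (U,V) is absolutely continuous w.r.t. Lebesgue measure on R^2
   (equivalent to a.s. absolute continuity of the conditional law given X). *)
Definition jointly_continuous (P : probability Omega R) (U V : Omega -> R)
  : Prop :=
  forall N : set (R * R), measurable N ->
    ((@lebesgue_measure R) \x (@lebesgue_measure R))%E N = 0%E ->
    P ((fun w => (U w, V w)) @^-1` N) = 0%E.

Definition rcd_given (P : probability Omega R) (X : Omega -> Xt)
  (U : Omega -> R) (k : R.-pker (Xt * R)%type ~> Omega) : Prop :=
  forall (A : set Omega) (B : set (Xt * R)), measurable A -> measurable B ->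
    P (A `&` ((fun w => (X w, U w)) @^-1` B)) =
    (\int[P]_(w in (fun w => (X w, U w)) @^-1` B) k (X w, U w) A)%E.

(* Pointwise conditional quantities, computed under mu = law given X=x,U=u. *)
Definition mY (mu : {measure set Omega -> \bar R}) (Q : bool -> Xt -> R)
  (X : Omega -> Xt) (V : Omega -> R) (Y : Omega -> R) (dd : bool) : R :=
  fine (\int[mu]_w (indR (sel Q X V dd w) * Y w)%:E)%E.

Definition mS (mu : {measure set Omega -> \bar R}) (Q : bool -> Xt -> R)
  (X : Omega -> Xt) (V : Omega -> R) (dd : bool) : R :=
  fine (mu [set w | sel Q X V dd w]).

Definition both_selected (Q : bool -> Xt -> R) (X : Omega -> Xt)
  (V : Omega -> R) : set Omega :=
  [set w | sel Q X V false w && sel Q X V true w].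

Definition theta (mu : {measure set Omega -> \bar R}) (Q : bool -> Xt -> R)
  (X : Omega -> Xt) (V : Omega -> R) (Y1 : Omega -> R) : R :=
  fine (\int[mu]_(w in both_selected Q X V) (Y1 w)%:E)%E /
  fine (mu (both_selected Q X V)).

End Model.

Definition ylow {R : realType} (Ys : set R) : \bar R :=
  ereal_inf [set y%:E | y in Ys].
Definition yhigh {R : realType} (Ys : set R) : \bar R :=
  ereal_sup [set y%:E | y in Ys].

From HB Require Import structures.
From mathcomp Require Import all_boot all_order all_algebra.
From mathcomp Require Import all_classical all_reals all_analysis.
From mathcomp Require Import lra.
Import Order.TTheory GRing.Theory Num.Theory.
Import numFieldNormedType.Exports.
Local Open Scope classical_set_scope.
Local Open Scope ring_scope.

(** By (A8) selection is monotone in treatment, [S_0 = 1] implies [S_1 = 1],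
    so the always-selected event [{S_0 = S_1 = 1}] is [{S_0 = 1}], and
    [{S_1 = 1}] is its disjoint union with the complier event
    [{S_1 = 1, S_0 = 0}], whose conditional mass is [Delta_S]. Hence
    [m_1^Y = theta m_0^S + E[Y_1^*; compliers]], and bounding [Y_1^*] on the
    complier event by the ends of its support bounds [theta]; bounding it on
    [{S_0 = 1}] gives the trivial bounds. *)

Section integral_bounds.
Context {R : realType} {d : measure_display} {T : measurableType d}
  (mu : {measure set T -> \bar R}) {A : set T}.
Hypotheses (mA : measurable A) (muA : (mu A < +oo)%E).

Lemma integrable_cst_finite (c : R) : mu.-integrable A (EFin \o cst c).
Proof.
apply/integrableP; split; first by rewrite (_ : EFin \o cst c = cst c%:E).
rewrite (eq_integral (cst `|c|%:E)) ?integral_cst //.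
by rewrite lte_mul_pinfty ?lee_fin.
Qed.

Lemma Rintegral_ge_cst (f : T -> R) (c : R) :
  mu.-integrable A (EFin \o f) -> (forall x, A x -> c <= f x) ->
  c * fine (mu A) <= \int[mu]_(x in A) f x.
Proof.
move=> intf cf; rewrite -Rintegral_cst //.
by apply: le_Rintegral => //; exact: integrable_cst_finite.
Qed.

Lemma Rintegral_le_cst (f : T -> R) (c : R) :
  mu.-integrable A (EFin \o f) -> (forall x, A x -> f x <= c) ->
  \int[mu]_(x in A) f x <= c * fine (mu A).
Proof.
move=> intf fc; rewrite -Rintegral_cst //.
by apply: le_Rintegral => //; exact: integrable_cst_finite.
Qed.

End integral_bounds.

Section trimming_bounds.
Context {R : realType} {d : measure_display} {T : measurableType d}
  (mu : {measure set T -> \bar R}) {S0 S1 : set T} {f : T -> R}.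
Hypotheses (mS0 : measurable S0) (mS1 : measurable S1) (S01 : S0 `<=` S1)
  (muS1 : (mu S1 < +oo)%E) (muS0_gt0 : 0 < fine (mu S0))
  (intf : mu.-integrable S1 (EFin \o f)).

Let mS10 : measurable (S1 `\` S0). Proof. exact: measurableD. Qed.

Let lty_sub {A : set T} : measurable A -> A `<=` S1 -> (mu A < +oo)%E.
Proof.
by move=> mA AS1; apply: le_lt_trans muS1; apply: le_measure; rewrite ?inE.
Qed.

Let intf_sub {A : set T} : measurable A -> A `<=` S1 ->
  mu.-integrable A (EFin \o f).
Proof. by move=> mA AS1; exact: integrableS intf. Qed.

Lemma fine_measure_subsetD :
  fine (mu S1) - fine (mu S0) = fine (mu (S1 `\` S0)).
Proof.
have fin A : measurable A -> A `<=` S1 -> mu A \is a fin_num.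
  by move=> mA AS1; rewrite ge0_fin_numE ?measure_ge0 ?lty_sub.
by rewrite (measureDI mu mS1 mS0) (setIidr S01) fineD ?fin // addrK.
Qed.

Lemma Rintegral_subsetD :
  \int[mu]_(x in S1) f x =
  \int[mu]_(x in S0) f x + \int[mu]_(x in S1 `\` S0) f x.
Proof.
by rewrite -Rintegral_setU ?setDUK // /disj_set setDIK.
Qed.

Lemma trimming_lower_bounds (l : R) : (forall x, S1 x -> l <= f x) ->
  l <= \int[mu]_(x in S0) f x / fine (mu S0) /\
  \int[mu]_(x in S0) f x / fine (mu S0) <=
    (\int[mu]_(x in S1) f x - l * (fine (mu S1) - fine (mu S0))) / fine (mu S0).
Proof.
move=> lf; rewrite Rintegral_subsetD fine_measure_subsetD.
have on_S0 : l * fine (mu S0) <= \int[mu]_(x in S0) f x.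
  by apply: Rintegral_ge_cst => [|||x /S01/lf]; rewrite ?lty_sub ?intf_sub.
have on_S10 : l * fine (mu (S1 `\` S0)) <= \int[mu]_(x in S1 `\` S0) f x.
  apply: Rintegral_ge_cst => [|||x [/lf //]];
    by rewrite ?lty_sub ?intf_sub //; exact: subDsetl.
split; first by rewrite ler_pdivlMr //; lra.
by rewrite ler_pM2r ?invr_gt0 //; lra.
Qed.

Lemma trimming_upper_bounds (h : R) : (forall x, S1 x -> f x <= h) ->
  (\int[mu]_(x in S1) f x - h * (fine (mu S1) - fine (mu S0))) / fine (mu S0)
    <= \int[mu]_(x in S0) f x / fine (mu S0) /\
  \int[mu]_(x in S0) f x / fine (mu S0) <= h.
Proof.
move=> fh; rewrite Rintegral_subsetD fine_measure_subsetD.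
have on_S0 : \int[mu]_(x in S0) f x <= h * fine (mu S0).
  by apply: Rintegral_le_cst => [|||x /S01/fh]; rewrite ?lty_sub ?intf_sub.
have on_S10 : \int[mu]_(x in S1 `\` S0) f x <= h * fine (mu (S1 `\` S0)).
  apply: Rintegral_le_cst => [|||x [/fh //]];
    by rewrite ?lty_sub ?intf_sub //; exact: subDsetl.
split; first by rewrite ler_pM2r ?invr_gt0 //; lra.
by rewrite ler_pdivrMr //; lra.
Qed.

End trimming_bounds.

Lemma ylow_le {R : realType} {Ys : set R} {y : R} :
  ylow Ys \is a fin_num -> Ys y -> fine (ylow Ys) <= y.
Proof.
by move=> lof Ysy; rewrite -lee_fin fineK //; apply: ereal_inf_lbound; exists y.
Qed.

Lemma yhigh_ge {R : realType} {Ys : set R} {y : R} :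
  yhigh Ys \is a fin_num -> Ys y -> y <= fine (yhigh Ys).
Proof.
by move=> hif Ysy; rewrite -lee_fin fineK //; apply: ereal_sup_ubound; exists y.
Qed.

Section selection.
Context {R : realType} {d dx : measure_display}
  {Omega : measurableType d} {Xt : measurableType dx}
  (Q : bool -> Xt -> R) (X : Omega -> Xt) (V : Omega -> R).

Lemma measurable_sel (dd : bool) : measurable_fun setT X ->
  measurable_fun setT V -> measurable_fun setT (Q dd) ->
  measurable [set w | sel Q X V dd w].
Proof.
move=> mX mV mQ; rewrite -[X in measurable X]setTI.
exact: (measurable_realfun.measurable_fun_ler mV (measurableT_comp mQ mX))
  measurableT [set true] I.
Qed.

Hypothesis Q_mono : forall x, Q false x <= Q true x.

Lemma sel_mono : [set w | sel Q X V false w] `<=` [set w | sel Q X V true w].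
Proof. by move=> w /= /le_trans; apply. Qed.

Lemma both_selected_sel0 : both_selected Q X V = [set w | sel Q X V false w].
Proof.
apply/seteqP; split=> w /=; first by case/andP.
by move=> sel0; apply/andP; split; last exact: sel_mono.
Qed.

End selection.

Lemma mY_Rintegral {R : realType} {d dx : measure_display}
  {Omega : measurableType d} {Xt : measurableType dx}
  (mu : {measure set Omega -> \bar R}) (Q : bool -> Xt -> R)
  (X : Omega -> Xt) (V Y : Omega -> R) (dd : bool) :
  mY mu Q X V Y dd = \int[mu]_(w in [set w | sel Q X V dd w]) Y w.
Proof.
rewrite Rintegral_mkcond /mY /Rintegral; congr fine.
apply: eq_integral => w _; rewrite /patch /indR.
have [selw|nselw] := boolP (sel Q X V dd w); first by rewrite mem_set ?mul1r.
by rewrite memNset ?mul0r //; exact/negP.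
Qed.

Theorem proposition1 (R : realType) (d dx dz : measure_display)
  (Omega : measurableType d) (Xt : measurableType dx) (Zt : measurableType dz)
  (P : probability Omega R)
  (X : Omega -> Xt) (Z : Omega -> Zt) (U V Y0 Y1 : Omega -> R)
  (Pf : Xt -> Zt -> R) (Q : bool -> Xt -> R) (Ys : set R)
  (k : R.-pker (Xt * R)%type ~> Omega) (x : Xt) (u : R)
  (* random variables and index functions are measurable *)
  (mX : measurable_fun setT X) (mZ : measurable_fun setT Z)
  (mU : measurable_fun setT U) (mV : measurable_fun setT V)
  (mY0 : measurable_fun setT Y0) (mY1 : measurable_fun setT Y1)
  (mPf : measurable_fun setT (fun p : Xt * Zt => Pf p.1 p.2))
  (mQ : forall dd, measurable_fun setT (Q dd))
  (Pf01 : forall x' z', 0 <= Pf x' z' <= 1)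
  (Q01 : forall dd x', 0 <= Q dd x' <= 1)
  (* latent variables *)
  (HUunif : uniform_given P X U) (HVunif : uniform_given P X V)
  (HUVcont : jointly_continuous P U V)
  (* (A1) *)
  (HA1 : cond_indep P X Z (fun w => (U w, V w, Y0 w, Y1 w)))
  (* (A2) *)
  (HA2 : ~ exists c : Xt -> R, measurable_fun setT c /\
           P [set w | Pf (X w) (Z w) = c (X w)] = 1%E)
  (* (A3) *)
  (HA3 : [/\ P.-integrable setT (EFin \o Y0), P.-integrable setT (EFin \o Y1),
             P.-integrable setT (EFin \o (fun w => Y0 w ^+ 2)) &
             P.-integrable setT (EFin \o (fun w => Y1 w ^+ 2))])
  (* (A4) *)
  (HA4 : exists p : Xt -> R,
           cond_prob_version P X [set w | treat Pf X Z U w] p /\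
           {ae P, forall w, 0 < p (X w) < 1})
  (* (A6): Y0*, Y1* take values in the common support Ys *)
  (HA6 : forall w, Ys (Y0 w) /\ Ys (Y1 w))
  (* (A8) *)
  (HA8 : forall x', Q true x' > Q false x' /\ Q false x' > 0)
  (* k is a regular conditional distribution given (X,U) *)
  (Hk : rcd_given P X U k)
  (Hu : 0 <= u <= 1)
  (* the conditional quantities at (x,u) are well defined *)
  (Hint0 : (k (x, u)).-integrable setT (EFin \o Y0))
  (Hint1 : (k (x, u)).-integrable setT (EFin \o Y1))
  (HmS0 : mS (k (x, u)) Q X V false != 0)
  (Hboth : fine (k (x, u) (both_selected Q X V)) != 0) :
  let mu := k (x, u) in
  let th := theta mu Q X V Y1 in
  let m1Y := mY mu Q X V Y1 true in
  let m0S := mS mu Q X V false in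
  let DS := mS mu Q X V true - mS mu Q X V false in
  let lo := ylow Ys in
  let hi := yhigh Ys in
  [/\ (* (i) under (A7.1) *)
      (lo \is a fin_num -> hi = +oo%E -> is_interval Ys ->
         fine lo <= th /\ th <= (m1Y - fine lo * DS) / m0S),
      (* (ii) under (A7.2) *)
      (lo = -oo%E -> hi \is a fin_num -> is_interval Ys ->
         (m1Y - fine hi * DS) / m0S <= th /\ th <= fine hi) &
      (* (iii) under (A7.3)(a) or (b) *)
      (lo \is a fin_num -> hi \is a fin_num ->
         (is_interval Ys \/ (Ys (fine lo) /\ Ys (fine hi))) ->
         (m1Y - fine hi * DS) / m0S <= th /\
         th <= (m1Y - fine lo * DS) / m0S)].
Proof.
cbv zeta.
pose S dd := [set w | sel Q X V dd w].
have mS dd : measurable (S dd) by exact: measurable_sel.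
have Q_mono x' : Q false x' <= Q true x' by exact/ltW/(HA8 x').1.
have S01 : S false `<=` S true := sel_mono Q X V Q_mono.
have muS1 : (k (x, u) (S true) < +oo)%E.
  rewrite (@le_lt_trans _ _ (k (x, u) setT)) ?le_measure ?inE //.
  by rewrite prob_kernel ltry.
have muS0_gt0 : 0 < fine (k (x, u) (S false)).
  by rewrite lt_def HmS0 fine_ge0 ?measure_ge0.
have intY1 : (k (x, u)).-integrable (S true) (EFin \o Y1).
  exact: integrableS Hint1.
have lower := trimming_lower_bounds (k (x, u)) (mS false) (mS true) S01 muS1
  muS0_gt0 intY1.
have upper := trimming_upper_bounds (k (x, u)) (mS false) (mS true) S01 muS1
  muS0_gt0 intY1.
have lo_Y1 (lof : ylow Ys \is a fin_num) w :
    S true w -> fine (ylow Ys) <= Y1 w.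
  by move=> _; exact: ylow_le lof (HA6 w).2.
have hi_Y1 (hif : yhigh Ys \is a fin_num) w :
    S true w -> Y1 w <= fine (yhigh Ys).
  by move=> _; exact: yhigh_ge hif (HA6 w).2.
rewrite /theta both_selected_sel0 // mY_Rintegral.
split=> [lof _ _ | _ hif _ | lof hif _].
- exact: lower (lo_Y1 lof).
- exact: upper (hi_Y1 hif).
- by split; [exact: (upper _ (hi_Y1 hif)).1 | exact: (lower _ (lo_Y1 lof)).2].
Qed.
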